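(* Let $S:\mathcal{T}\to\mathcal{T}^{pl}$ be a section of the forget-planarity projection $\pi:\mathcal{T}^{pl}\to\mathcal{T}$, i.e. a linear map sending each non-planar rooted tree $t$ to a planar rooted tree $S(t)$ with $\pi(S(t))=t$. Let $\widetilde{\Psi}_S:=\pi\circ\Psi\circ S:\mathcal{T}\to\mathcal{T}$. Then for every non-planar rooted tree $t$, $$\widetilde{\Psi}_S(t)=\sum_{s\in T}\beta_S(s,t)\,s,$$ where the $\beta_S(s,t)$ are nonnegative integers (depending on $S$), given by $\beta_S(s,t)=\tilde b(s,S(t))/sym(s)$, where $sym(s)$ is the symmetry factor of $s$ and $\tilde b(s,\tau)$ is the number of bijections $\varphi:V(s)\to V(\tau)$ which are increasing from $(V(s),<)$ into $(V(\tau),\lll)$ and such that $\varphi^{-1}$ is increasing from $(V(\tau),<)$ into $(V(s),<)$.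
   Context: $\mathcal{T}^{pl}$ (resp. $\mathcal{T}$) is the vector space spanned by the set $T^{pl}$ of planar rooted trees (resp. the set $T$ of non-planar rooted trees); a rooted tree is a finite oriented tree with a root having no outgoing edge, every other vertex having exactly one outgoing edge, and it is planar if the branches at each vertex are ordered left to right. $\bullet$ is the one-vertex tree, $V(\sigma)$ the vertex set. For planar trees, $B_+(\tau_1\cdots\tau_k)$ joins the roots of the ordered trees $\tau_i$ to a new root; the left Butcher product is $\sigma\circ\!\!\searrow B_+(\tau_1\cdots\tau_k):=B_+(\sigma\tau_1\cdots\tau_k)$, and each planar tree with at least two vertices is uniquely $\sigma_1\circ\!\!\searrow\sigma_2$. The left grafting is $\sigma\searrow\tau=\sum_{v\in V(\tau)}\sigma\searrow_v\tau$, where $\sigma\searrow_v\tau$ grafts the root of $\sigma$ onto $v$ as the leftmost branch at $v$. $\Psi:\mathcal{T}^{pl}\to\mathcal{T}^{pl}$ is the linear map with $\Psi(\bullet)=\bullet$ and $\Psi(\sigma_1\circ\!\!\searrow\sigma_2)=\Psi(\sigma_1)\searrow\Psi(\sigma_2)$. Partial order $<$: $v<w$ if $v\ne w$ and the path from the root to $w$ passes through $v$. Total order $\lll$ on a planar tree $\tau=\tau_1\circ\!\!\searrow\tau_2$, recursively: $v\lll w$ iff ($v\lll w$ within $V(\tau_1)$ or within $V(\tau_2)$) or ($v\in V(\tau_2)$, $w\in V(\tau_1)$). Increasing means order-preserving. $sym(s)$ is the number of bijections $V(s)\to V(s)$ increasing for $<$ in both directions (tree automorphisms). *)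

From HB Require Import structures.
From mathcomp Require Import all_boot all_order all_algebra.
Set Implicit Arguments. Unset Strict Implicit. Unset Printing Implicit Defensive.

Inductive ptree : Type := Node of seq ptree.

Definition pbullet : ptree := Node [::].

Fixpoint tree_of (t : ptree) : GenTree.tree unit :=
  let: Node l := t in GenTree.Node 0 (map tree_of l).

Fixpoint of_tree (x : GenTree.tree unit) : ptree :=
  match x with
  | GenTree.Leaf _ => Node [::]
  | GenTree.Node _ l => Node (map of_tree l)
  end.

Fixpoint ptree_K (t : ptree) : of_tree (tree_of t) = t :=
  match t with
  | Node l => f_equal Node
      ((fix go (l : seq ptree) : map of_tree (map tree_of l) = l :=
          match l with
          | [::] => erefl
          | x :: r => f_equal2 cons (ptree_K x) (go r)
          end) l)
  end.

HB.instance Definition _ := Countable.copy ptree (can_type ptree_K).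

(* A vertex is coded by its address: the list of child indices (0 = leftmost)
   followed on the path from the root.  The root is [::]. *)
Fixpoint verts (t : ptree) : seq (seq nat) :=
  let: Node l := t in
  [::] :: (fix go (i : nat) (l : seq ptree) : seq (seq nat) :=
             match l with
             | [::] => [::]
             | s :: r => map (cons i) (verts s) ++ go i.+1 r
             end) 0 l.

Definition V (t : ptree) := seq_sub (verts t).

(* Partial order <: v < w iff v <> w and the root-to-w path passes through v,
   i.e. the address of v is a proper prefix of that of w. *)
Definition addr_lt (v w : seq nat) : bool := (size v < size w) && prefix v w.
Definition vlt (t : ptree) (a b : V t) : bool := addr_lt (val a) (val b).

(* Total order <<< , defined recursively through t = t1 o-> t2
   (t1 = leftmost branch, t2 = the root with the remaining branches).
   Vertices of t1 are the addresses 0 :: x (x a vertex of t1);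
   vertices of t2 are [::] and (i.+1 :: x) (= vertex (i :: x) of t2). *)
Definition shift_addr (v : seq nat) : seq nat :=
  match v with [::] => [::] | i :: x => i.-1 :: x end.

Fixpoint lll (t : ptree) (v w : seq nat) {struct t} : bool :=
  let: Node l := t in
  (fix go (l : seq ptree) (v w : seq nat) {struct l} : bool :=
     match l with
     | [::] => false
     | t1 :: r =>
       match v, w with
       | 0 :: v', 0 :: w' => lll t1 v' w'      (* both in V(t1) *)
       | 0 :: _, _ => false                    (* v in V(t1), w in V(t2) *)
       | _, 0 :: _ => true                     (* v in V(t2), w in V(t1) *)
       | _, _ => go r (shift_addr v) (shift_addr w) (* both in V(t2) *)
       end
     end) l v w.

(* sigma ->_v tau : graft the root of sigma onto v as leftmost branch at v. *)
Fixpoint graft (sigma : ptree) (v : seq nat) (tau : ptree) {struct v} : ptree :=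
  let: Node l := tau in
  match v with
  | [::] => Node (sigma :: l)
  | i :: v' => Node [seq if j == i then graft sigma v' c else c
                    | j <- iota 0 (size l), c <- [:: nth (Node [::]) l j]]
  end.

(* Linear combinations of planar trees with coefficients in nat are encoded as
   finite lists (formal sums, with multiplicity). *)
Definition lincomb := seq ptree.

Definition graftL (A B : lincomb) : lincomb :=
  flatten [seq [seq graft a v b | v <- verts b] | a <- A, b <- B].

Fixpoint Psi (t : ptree) : lincomb :=
  let: Node l := t in
  (fix go (l : seq ptree) : lincomb :=
     match l with
     | [::] => [:: pbullet]
     | t1 :: r => graftL (Psi t1) (go r)
     end) l.

(* Canonical representative of the non-planar tree underlying a planar tree:
   recursively canonicalize the branches and sort them (by a fixed injective
   coding).  Two planar trees have the same underlying non-planar tree iff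
   they have the same canonical form. *)
Definition ptree_le (a b : ptree) : bool := pickle a <= pickle b.

Fixpoint canon (t : ptree) : ptree :=
  let: Node l := t in Node (sort ptree_le (map canon l)).

(* T : the set of non-planar rooted trees (as canonical representatives). *)
Definition ntree := {t : ptree | canon t == t}.

Definition pi_lc (X : lincomb) : seq ptree := map canon X.

Definition coef (s : ntree) (X : seq ptree) : nat := count (pred1 (val s)) X.

Definition PsiTilde (S : ntree -> ptree) (t : ntree) : seq ptree :=
  pi_lc (Psi (S t)).

(* btilde(s, tau): bijections phi : V(s) -> V(tau), increasing from (V(s),<)
   into (V(tau),<<<), with phi^-1 increasing from (V(tau),<) into (V(s),<)
   (written out as: phi a < phi b -> a < b). *)
Definition btilde (s tau : ptree) : nat :=
  #|[pred f : {ffun V s -> V tau} |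
      [&& injectiveb f, [forall y, exists x, f x == y],
          [forall a, forall b, vlt a b ==> lll tau (val (f a)) (val (f b))]
        & [forall a, forall b, vlt (f a) (f b) ==> vlt a b]]]|.

Definition sym (s : ptree) : nat :=
  #|[pred f : {ffun V s -> V s} |
      [&& injectiveb f, [forall y, exists x, f x == y],
          [forall a, forall b, vlt a b ==> vlt (f a) (f b)]
        & [forall a, forall b, vlt (f a) (f b) ==> vlt a b]]]|.

From HB Require Import structures.
From mathcomp Require Import all_boot all_order all_algebra.
From mathcomp Require Import zify.
Set Implicit Arguments. Unset Strict Implicit. Unset Printing Implicit Defensive.

(* Write [tau] as [t1 o-> t2] and count the bimonotone bijections from a rooted
   order [(A, R)] into [(V tau, <, <<<)] according to the element [u] sent to
   the root of [t1]: the count factors into one for the subtree at [u] into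
   [t1] and one for its complement into [t2].  The same factorisation holds for
   each graft [X = x ->_v y] in [Psi tau], with the extra condition that the
   ancestors of [u] go to the ancestors of [v]; summing over [v] removes that
   condition, since exactly one [v] works for each bijection (the image of the
   parent of [u]).  By induction, [btilde s tau] is the sum over [X] in
   [Psi tau] of the number of isomorphisms from [s] to [X], which is [sym s]
   when [canon X = s] and [0] otherwise. *)

Section Bimonotone.
Variables A B : finType.
Implicit Types (f : {ffun A -> B}) (RA : rel A) (RB LB : rel B).

Definition bijectiveb f := injectiveb f && [forall y, exists x, f x == y].

Definition bimonotone RA RB LB f :=
  [forall a, forall b, RA a b ==> LB (f a) (f b)] &&
  [forall a, forall b, RB (f a) (f b) ==> RA a b].

Definition nbimonotone RA RB LB :=
  #|[pred f | bijectiveb f && bimonotone RA RB LB f]|.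

Lemma bijectivebP f :
  reflect (injective f /\ forall y, exists x, f x = y) (bijectiveb f).
Proof.
apply: (iffP andP) => [[/injectiveP fi /forallP fs]|[fi fs]]; split => //.
- by move=> y; have /existsP [x /eqP] := fs y; exists x.
- exact/injectiveP.
- by apply/forallP => y; have [x <-] := fs y; apply/existsP; exists x.
Qed.

Lemma bimonotoneP RA RB LB f :
  reflect ((forall a b, RA a b -> LB (f a) (f b)) /\
           (forall a b, RB (f a) (f b) -> RA a b))
    (bimonotone RA RB LB f).
Proof.
apply: (iffP andP) => [[/forallP H1 /forallP H2]|[H1 H2]]; split.
- by move=> a b; move/forallP: (H1 a) => /(_ b) /implyP.
- by move=> a b; move/forallP: (H2 a) => /(_ b) /implyP.
- by apply/forallP => a; apply/forallP => b; apply/implyP; apply: H1.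
- by apply/forallP => a; apply/forallP => b; apply/implyP; apply: H2.
Qed.

Lemma eq_bimonotone RA RA' RB RB' LB LB' f :
  RA =2 RA' -> RB =2 RB' -> LB =2 LB' ->
  bimonotone RA RB LB f = bimonotone RA' RB' LB' f.
Proof.
move=> eA eB eL; congr andb; apply: eq_forallb => a; apply: eq_forallb => b.
  by rewrite eA eL.
by rewrite eA eB.
Qed.

Lemma card_bij_fiber (Q : pred {ffun A -> B}) (b0 : B) :
  (forall f, Q f -> bijectiveb f) ->
  #|Q| = \sum_(u : A) #|[pred f | Q f && (f u == b0)]|.
Proof.
move=> Qbij.
have fiberE u : #|[pred f | Q f && (f u == b0)]| =
    \sum_f (if Q f && (f u == b0) then 1 else 0).
  by rewrite -sum1_card big_mkcond.
under eq_bigr do rewrite fiberE.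
rewrite exchange_big -sum1_card big_mkcond /=; apply: eq_bigr => f _.
rewrite unfold_in; case Qf: (Q f) => /=; last by rewrite big1.
have /bijectivebP [fi fs] := Qbij f Qf; have [u fu] := fs b0.
rewrite (bigD1 u) //= fu eqxx big1 // => v vu.
by case: eqP => // fv; case/eqP: vu; apply: fi; rewrite fv fu.
Qed.

Lemma nbimonotone_fiber RA RB LB (b0 : B) :
  nbimonotone RA RB LB =
  \sum_(u : A) #|[pred f | [&& bijectiveb f, bimonotone RA RB LB f & f u == b0]]|.
Proof.
rewrite /nbimonotone (@card_bij_fiber _ b0); last by move=> f /andP [].
by apply: eq_bigr => u _; apply: eq_card => f; rewrite !inE andbA.
Qed.

Lemma nbimonotone_eq0 RA RB LB (b : B) : #|A| = 0 -> nbimonotone RA RB LB = 0.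
Proof.
move=> A0; apply: eq_card0 => f; rewrite inE.
apply/negbTE/negP => /andP [/bijectivebP [_ fs] _]; have [a _] := fs b.
by move: A0; rewrite (cardD1 a).
Qed.

End Bimonotone.

Lemma leq_nbimonotone_comp (A B B' : finType) (RA : rel A) (RB LB : rel B)
    (RB' LB' : rel B') (h : B -> B') :
  injective h -> (forall y, exists x, h x = y) ->
  (forall x y, RB' (h x) (h y) -> RB x y) -> (forall x y, LB x y -> LB' (h x) (h y)) ->
  nbimonotone RA RB LB <= nbimonotone RA RB' LB'.
Proof.
move=> hi hs hR hL; pose F (f : {ffun A -> B}) := [ffun a => h (f a)].
have Fi : injective F.
  by move=> f g /ffunP E; apply/ffunP => a; move: (E a); rewrite !ffunE; apply: hi.
rewrite /nbimonotone -(card_imset _ Fi); apply: subset_leq_card; apply/subsetP => g /imsetP [f].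
rewrite !inE => /andP [/bijectivebP [fi fs] /bimonotoneP [C1 C2]] ->.
apply/andP; split.
  apply/bijectivebP; split; first by move=> a b; rewrite !ffunE => /hi /fi.
  by move=> y; have [z <-] := hs y; have [x <-] := fs z; exists x; rewrite ffunE.
by apply/bimonotoneP; split=> a b; rewrite !ffunE => ?; [apply/hL/C1 | apply/C2/hR].
Qed.

(** * Gluing bijections *)

(* [A] as the disjoint union of the images of two injections. *)
Record bisplit (A : finType) := Bisplit {
  bs_mem : pred A;
  bs_T1 : finType;
  bs_T2 : finType;
  bs_in1 : bs_T1 -> A;
  bs_in2 : bs_T2 -> A;
  bs_in1_inj : injective bs_in1;
  bs_in2_inj : injective bs_in2;
  bs_mem1 : forall x, bs_mem (bs_in1 x);
  bs_mem2 : forall y, ~~ bs_mem (bs_in2 y);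
  bs_onto1 : forall a, bs_mem a -> exists x, bs_in1 x = a;
  bs_onto2 : forall a, ~~ bs_mem a -> exists y, bs_in2 y = a }.

Variant bisplit_spec (A : finType) (S : bisplit A) : A -> Prop :=
  | Bisplit1 x : bisplit_spec S (@bs_in1 _ S x)
  | Bisplit2 y : bisplit_spec S (@bs_in2 _ S y).

Lemma bisplitP (A : finType) (S : bisplit A) a : bisplit_spec S a.
Proof.
case Da: (bs_mem S a).
  by have [x <-] := bs_onto1 Da; constructor.
by have [y <-] := bs_onto2 (negbT Da); constructor.
Qed.

Definition bisplit_sub (A : finType) (D : pred A) : bisplit A :=
  @Bisplit A D {a : A | D a} {a : A | ~~ D a} val val val_inj val_inj
    (fun x => valP x) (fun y => valP y)
    (fun a Da => ex_intro _ (exist _ a Da) erefl)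
    (fun a Da => ex_intro _ (exist _ a Da) erefl).

Section Glue.
Variables (A B : finType) (SA : bisplit A) (SB : bisplit B) (b0 : B).
Local Notation A1 := (bs_T1 SA). Local Notation A2 := (bs_T2 SA).
Local Notation B1 := (bs_T1 SB). Local Notation B2 := (bs_T2 SB).
Local Notation e1 := (@bs_in1 _ SA). Local Notation e2 := (@bs_in2 _ SA).
Local Notation d1 := (@bs_in1 _ SB). Local Notation d2 := (@bs_in2 _ SB).

(* [b0] is a dummy value: every [a] lies in the image of [e1] or of [e2]. *)
Definition glue (g1 : {ffun A1 -> B1}) (g2 : {ffun A2 -> B2}) : {ffun A -> B} :=
  [ffun a => if [pick x | e1 x == a] is Some x then d1 (g1 x)
             else if [pick y | e2 y == a] is Some y then d2 (g2 y) else b0].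

Lemma glue1 g1 g2 x : glue g1 g2 (e1 x) = d1 (g1 x).
Proof.
rewrite ffunE; case: pickP => [x' /eqP /bs_in1_inj -> //|/(_ x)].
by rewrite eqxx.
Qed.

Lemma glue2 g1 g2 y : glue g1 g2 (e2 y) = d2 (g2 y).
Proof.
rewrite ffunE; case: pickP => [x' /eqP E|_].
  by move: (bs_mem1 x') (bs_mem2 y); rewrite E => ->.
case: pickP => [y' /eqP /bs_in2_inj -> //|/(_ y)].
by rewrite eqxx.
Qed.

Lemma glue_bij g1 g2 : bijectiveb g1 -> bijectiveb g2 -> bijectiveb (glue g1 g2).
Proof.
have d12 x y : d1 x <> d2 y by move=> E; move: (bs_mem1 x) (bs_mem2 y); rewrite E => ->.
move=> /bijectivebP [i1 s1] /bijectivebP [i2 s2]; apply/bijectivebP; split.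
  move=> a a'; case: (bisplitP SA a) => [x|y]; case: (bisplitP SA a') => [x'|y'];
    rewrite ?glue1 ?glue2.
  - by move/(@bs_in1_inj _ SB)/i1 ->.
  - by move=> E; case: (d12 _ _ E).
  - by move=> E; case: (d12 _ _ (esym E)).
  - by move/(@bs_in2_inj _ SB)/i2 ->.
move=> b; case: (bisplitP SB b) => [z|z].
  by have [x <-] := s1 z; exists (e1 x); rewrite glue1.
by have [y <-] := s2 z; exists (e2 y); rewrite glue2.
Qed.

Lemma glue_inj : injective (fun g : {ffun A1 -> B1} * {ffun A2 -> B2} => glue g.1 g.2).
Proof.
move=> [g1 g2] [h1 h2] /= E; congr pair; apply/ffunP => z.
  by apply: (@bs_in1_inj _ SB); rewrite -(glue1 g1 g2) -(glue1 h1 h2) E.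
by apply: (@bs_in2_inj _ SB); rewrite -(glue2 g1 g2) -(glue2 h1 h2) E.
Qed.

Lemma glue_onto f : bijectiveb f -> [forall a, bs_mem SB (f a) == bs_mem SA a] ->
  exists g1 g2, [/\ bijectiveb g1, bijectiveb g2 & glue g1 g2 = f].
Proof.
move=> /bijectivebP [fi fs] /forallP fD.
have [g1 Hg1] : exists g : A1 -> B1, forall x, d1 (g x) = f (e1 x).
  apply: (@fin_all_exists _ (fun _ => B1) (fun x z => d1 z = f (e1 x))) => x.
  by apply: bs_onto1; rewrite (eqP (fD _)) bs_mem1.
have [g2 Hg2] : exists g : A2 -> B2, forall y, d2 (g y) = f (e2 y).
  apply: (@fin_all_exists _ (fun _ => B2) (fun y z => d2 z = f (e2 y))) => y.
  by apply: bs_onto2; rewrite (eqP (fD _)) bs_mem2.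
exists (finfun g1), (finfun g2); split.
- apply/bijectivebP; split.
    by move=> x x'; rewrite !ffunE => /(congr1 d1); rewrite !Hg1 => /fi /bs_in1_inj.
  move=> z; have [a fa] := fs (d1 z).
  have /bs_onto1 [x ex] : bs_mem SA a by rewrite -(eqP (fD a)) fa bs_mem1.
  by exists x; apply: (@bs_in1_inj _ SB); rewrite ffunE Hg1 ex.
- apply/bijectivebP; split.
    by move=> y y'; rewrite !ffunE => /(congr1 d2); rewrite !Hg2 => /fi /bs_in2_inj.
  move=> z; have [a fa] := fs (d2 z).
  have /bs_onto2 [y ey] : ~~ bs_mem SA a by rewrite -(eqP (fD a)) fa bs_mem2.
  by exists y; apply: (@bs_in2_inj _ SB); rewrite ffunE Hg2 ey.
- by apply/ffunP => a; case: (bisplitP SA a) => [x|y]; rewrite ?glue1 ?glue2 ffunE.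
Qed.

Lemma card_bij_glue (P : pred {ffun A -> B}) (P1 : pred {ffun A1 -> B1})
    (P2 : pred {ffun A2 -> B2}) :
  (forall g1 g2, bijectiveb g1 -> bijectiveb g2 -> P (glue g1 g2) = P1 g1 && P2 g2) ->
  #|[pred f | [&& bijectiveb f, [forall a, bs_mem SB (f a) == bs_mem SA a] & P f]]| =
  #|[pred g | bijectiveb g && P1 g]| * #|[pred g | bijectiveb g && P2 g]|.
Proof.
move=> HP; pose X1 := [set g | bijectiveb g && P1 g].
pose X2 := [set g | bijectiveb g && P2 g].
transitivity #|(fun g => glue g.1 g.2) @: setX X1 X2|; last first.
  by rewrite (card_imset _ glue_inj) cardsX !cardsE.
apply: eq_card => f; rewrite !inE; apply/idP/imsetP.
  case/and3P => bf fD Pf; have [g1 [g2 [b1 b2 Ef]]] := glue_onto bf fD.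
  by exists (g1, g2); rewrite // !inE /= b1 b2 -HP // Ef.
case=> [[g1 g2]]; rewrite !inE /= => /andP [/andP [b1 p1] /andP [b2 p2]] ->.
apply/and3P; split; [exact: glue_bij | apply/forallP => a | by rewrite HP // p1 p2].
case: (bisplitP SA a) => [x|y]; rewrite ?glue1 ?glue2 ?bs_mem1 //.
by rewrite !(negbTE (bs_mem2 _)).
Qed.

Section GlueMonotone.
Variables (RA : rel A) (RB LB : rel B).
Hypotheses (RA12 : forall x y, RA (e1 x) (e2 y) = false)
           (RB12 : forall x y, RB (d1 x) (d2 y) = false).

Definition bimonotone_across (g1 : {ffun A1 -> B1}) (g2 : {ffun A2 -> B2}) :=
  [forall y, forall x, (RA (e2 y) (e1 x) ==> LB (d2 (g2 y)) (d1 (g1 x))) &&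
                       (RB (d2 (g2 y)) (d1 (g1 x)) ==> RA (e2 y) (e1 x))].

Lemma bimonotone_glue g1 g2 :
  bimonotone RA RB LB (glue g1 g2) =
  [&& bimonotone (relpre e1 RA) (relpre d1 RB) (relpre d1 LB) g1,
      bimonotone (relpre e2 RA) (relpre d2 RB) (relpre d2 LB) g2 &
      bimonotone_across g1 g2].
Proof.
apply/bimonotoneP/and3P => [[H1 H2]|[/bimonotoneP [c11 c12] /bimonotoneP [c21 c22]]].
  split; first (apply/bimonotoneP; split => x x' /=; rewrite -!(glue1 g1 g2)).
  - exact: H1.
  - exact: H2.
  - by apply/bimonotoneP; split => y y' /=; rewrite -!(glue2 g1 g2); [apply: H1|apply: H2].
  - apply/forallP => y; apply/forallP => x; rewrite -(glue1 g1 g2) -(glue2 g1 g2).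
    by apply/andP; split; apply/implyP; [apply: H1|apply: H2].
move=> /forallP c3; split => a b;
  case: (bisplitP SA a) => [x|y]; case: (bisplitP SA b) => [x'|y'];
  rewrite ?glue1 ?glue2 ?RA12 ?RB12 //.
- exact: c11.
- by move/forallP: (c3 y) => /(_ x') /andP [/implyP].
- exact: c21.
- exact: c12.
- by move/forallP: (c3 y) => /(_ x') /andP [_ /implyP].
- exact: c22.
Qed.

Lemma bimonotone_glue_eq (RA1 : rel A1) (RB1 LB1 : rel B1) (RA2 : rel A2) (RB2 LB2 : rel B2)
    (X : bool) g1 g2 :
  relpre e1 RA =2 RA1 -> relpre d1 RB =2 RB1 -> relpre d1 LB =2 LB1 ->
  relpre e2 RA =2 RA2 -> relpre d2 RB =2 RB2 -> relpre d2 LB =2 LB2 ->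
  (bimonotone RA2 RB2 LB2 g2 -> bimonotone_across g1 g2 = X) ->
  bimonotone RA RB LB (glue g1 g2) =
  [&& bimonotone RA1 RB1 LB1 g1, bimonotone RA2 RB2 LB2 g2 & X].
Proof.
move=> eA1 eB1 eL1 eA2 eB2 eL2 eX.
rewrite bimonotone_glue (eq_bimonotone g1 eA1 eB1 eL1) (eq_bimonotone g2 eA2 eB2 eL2).
by case: (boolP (bimonotone RA2 RB2 LB2 g2)) => [/eX ->|]; rewrite ?andbF.
Qed.

End GlueMonotone.
End Glue.

(** * Vertex addresses *)

Section Addresses.
Implicit Types (a b c v w : seq nat) (i k : nat).

Lemma prefix_size_eq a b : prefix a b -> size a = size b -> a = b.
Proof. by rewrite prefixE => + eab; rewrite eab take_size => /eqP. Qed.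

Lemma prefix_antisym a b : prefix a b -> prefix b a -> a = b.
Proof.
move=> ab ba; have /eqP sab : size a == size b.
  by rewrite eqn_leq (size_prefix ab) (size_prefix ba).
exact: prefix_size_eq ab sab.
Qed.

Lemma prefix_cat2l v a b : prefix (v ++ a) (v ++ b) = prefix a b.
Proof. by rewrite prefix_catr // eqxx. Qed.

Lemma prefixes_comparable a b c : prefix a c -> prefix b c -> prefix a b || prefix b a.
Proof.
elim: c a b => [|z c IH] [|x a] [|y b] //=.
by case/andP => /eqP -> /IH H /andP [/eqP -> /H]; rewrite eqxx.
Qed.

Lemma addr_ltE a b : addr_lt a b = (a != b) && prefix a b.
Proof.
rewrite /addr_lt; have [pab|] := boolP (prefix a b); rewrite ?andbF ?andbT //.
rewrite ltn_neqAle size_prefix // andbT.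
by apply/negb_inj; rewrite !negbK; apply/eqP/eqP => [/(prefix_size_eq pab)|->].
Qed.

Lemma prefix_eqVlt a b : prefix a b = (a == b) || addr_lt a b.
Proof. by rewrite addr_ltE; case: eqP => // ->; rewrite prefix_refl. Qed.

Lemma addr_lt_trans : transitive addr_lt.
Proof.
move=> b a c /andP [s1 p1] /andP [s2 p2].
by rewrite /addr_lt (ltn_trans s1 s2) (prefix_trans p1 p2).
Qed.

Lemma addr_ltxx a : addr_lt a a = false.
Proof. by rewrite /addr_lt ltnn. Qed.

Lemma addr_lt0s a : addr_lt [::] a = (a != [::]).
Proof. by case: a. Qed.

Lemma addr_lts0 a : addr_lt a [::] = false.
Proof. by rewrite /addr_lt ltn0. Qed.

Lemma addr_lt_cons2 i a b : addr_lt (i :: a) (i :: b) = addr_lt a b.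
Proof. by rewrite /addr_lt /= eqxx. Qed.

Lemma addr_lt_cat2l v a b : addr_lt (v ++ a) (v ++ b) = addr_lt a b.
Proof. by rewrite /addr_lt !size_cat ltn_add2l prefix_cat2l. Qed.

(* The address in [Node l] of the vertex [w] of [Node (delete i l)]. *)
Definition lift_addr i w := if w is k :: z then bump i k :: z else [::].

Lemma lift_addr_inj i : injective (lift_addr i).
Proof. by move=> [|k z] [|k' z'] //= [/(can_inj (bumpK i)) -> ->]. Qed.

Lemma addr_lt_lift2 i a b : addr_lt (lift_addr i a) (lift_addr i b) = addr_lt a b.
Proof.
by case: a => [|k z]; case: b => [|k' z'] //=; rewrite /addr_lt /= (inj_eq (can_inj (bumpK i))).
Qed.

Lemma addr_lt_cons_lift i a b : addr_lt (i :: a) (lift_addr i b) = false.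
Proof. by case: b => [|k z] //; rewrite /addr_lt /= (negbTE (neq_bump i k)) andbF. Qed.

Lemma addr_lt_lift_cons i a b : addr_lt (lift_addr i a) (i :: b) = (a == [::]).
Proof. by case: a => [|k z] //; rewrite /addr_lt /= eq_sym (negbTE (neq_bump i k)) andbF. Qed.

(* The address in [graft x v y] of the vertex [w] of [y]: the children of [v]
   move one place to the right. *)
Fixpoint shift_at v w {struct w} : seq nat :=
  match v, w with
  | [::], [::] => [::]
  | [::], k :: z => k.+1 :: z
  | i :: v', [::] => [::]
  | i :: v', k :: z => k :: (if k == i then shift_at v' z else z)
  end.

Lemma size_shift_at v w : size (shift_at v w) = size w.
Proof. by elim: w v => [|k z IH] [|i v] //=; case: eqP => //= _; rewrite IH. Qed.

Lemma prefix_shift_at2 v a b : prefix (shift_at v a) (shift_at v b) = prefix a b.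
Proof.
elim: a v b => [|k z IH] [|i v] [|k' z'] //=.
case: (eqVneq k k') => [<-|ne]; rewrite ?eqxx ?(negbTE ne) //=.
by case: eqP => // _; rewrite IH.
Qed.

Lemma shift_at_inj v : injective (shift_at v).
Proof.
by move=> a b E; apply: prefix_antisym; rewrite -(prefix_shift_at2 v) E prefix_refl.
Qed.

Lemma addr_lt_shift_at2 v a b : addr_lt (shift_at v a) (shift_at v b) = addr_lt a b.
Proof. by rewrite /addr_lt !size_shift_at prefix_shift_at2. Qed.

Lemma prefix_rcons0_shift_at v b : prefix (rcons v 0) (shift_at v b) = false.
Proof.
elim: v b => [|i v IH] [|k z] //=.
by case: (i =P k) => [<-|//]; rewrite eqxx /= IH.
Qed.

Lemma prefix_rcons0_cat v a : prefix (rcons v 0) (v ++ 0 :: a).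
Proof. by rewrite -cats1 prefix_cat2l /= prefix0s. Qed.

Lemma addr_lt_cat_shift_at v a b : addr_lt (v ++ 0 :: a) (shift_at v b) = false.
Proof.
apply/negbTE/negP => /andP [_ /(prefix_trans (prefix_rcons0_cat v a))].
by rewrite prefix_rcons0_shift_at.
Qed.

Lemma addr_lt_shift_at_cat v a b : addr_lt (shift_at v a) (v ++ 0 :: b) = prefix a v.
Proof.
have prefix_shift_cat : prefix (shift_at v a) (v ++ 0 :: b) = prefix a v.
  elim: v a => [|i v IH] [|k z] /=; rewrite ?prefix0s //.
  by case: (k =P i) => //= _; apply: IH.
rewrite /addr_lt prefix_shift_cat size_shift_at size_cat /=.
have [pav|] := boolP (prefix a v); rewrite ?andbF // andbT.
by rewrite addnS ltnS (leq_trans (size_prefix pav)) // leq_addr.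
Qed.

End Addresses.

Lemma ptree_cons_ind (P : ptree -> Prop) :
  P pbullet -> (forall t1 r, P t1 -> P (Node r) -> P (Node (t1 :: r))) ->
  forall t, P t.
Proof.
move=> P0 Pcons; fix IH 1 => -[l].
elim: l => [//|t1 r IHr]; exact: Pcons (IH t1) IHr.
Qed.

Fixpoint verts_from (i : nat) (l : seq ptree) : seq (seq nat) :=
  if l is s :: r then map (cons i) (verts s) ++ verts_from i.+1 r else [::].

Lemma vertsE l : verts (Node l) = [::] :: verts_from 0 l.
Proof. by []. Qed.

Lemma mem_verts_from i0 l w : (w \in verts_from i0 l) =
  if w is k :: z
  then (i0 <= k) && (k - i0 < size l) && (z \in verts (nth pbullet l (k - i0)))
  else false.
Proof.
elim: l i0 => [|s r IH] i0 /=; first by case: w => // k z; rewrite ltn0 andbF.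
rewrite mem_cat IH; case: w {IH} => [|k z]; first by rewrite orbF; apply/mapP => -[].
have -> : (k :: z \in map (cons i0) (verts s)) = (k == i0) && (z \in verts s).
  by apply/mapP/andP => [[z' zs [-> ->]] //|[/eqP -> zs]]; exists z.
case: (ltngtP i0 k) => [lt_i0k|//|<-]; last by rewrite subnn /= orbF.
by have -> : k - i0 = (k - i0.+1).+1 by lia.
Qed.

Lemma mem_verts_Node l w : (w \in verts (Node l)) =
  if w is k :: z then (k < size l) && (z \in verts (nth pbullet l k)) else true.
Proof. by rewrite vertsE in_cons mem_verts_from; case: w => [|k z] //=; rewrite subn0. Qed.

Lemma verts_root t : [::] \in verts t.
Proof. by case: t => l; rewrite mem_verts_Node. Qed.

Lemma verts_from_succ i l : verts_from i.+1 l = map (lift_addr 0) (verts_from i l).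
Proof. by elim: l i => //= s r IH i; rewrite map_cat IH -map_comp. Qed.

Lemma uniq_verts t : uniq (verts t).
Proof.
elim/ptree_cons_ind: t => // t1 r uniq1; rewrite !vertsE /= verts_from_succ.
case/andP=> r_root uniq_r.
have lift0_root : ([::] \in map (lift_addr 0) (verts_from 0 r)) = ([::] \in verts_from 0 r).
  exact: (mem_map (@lift_addr_inj 0) _ [::]).
rewrite mem_cat lift0_root (negbTE r_root) orbF cat_uniq.
have cons0_inj : injective (cons 0) by move=> a b [].
rewrite (map_inj_uniq (@lift_addr_inj 0)) uniq_r (map_inj_uniq cons0_inj) uniq1.
rewrite andbT; apply/andP; split; first by apply/mapP => -[].
apply/hasPn => _ /mapP [[|k z] wr ->] //=; first by rewrite wr in r_root.
by apply/mapP => -[z' _ []].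
Qed.

Definition vmap (t t' : ptree) (f : seq nat -> seq nat)
  (Hf : forall w, w \in verts t -> f w \in verts t') : V t -> V t' :=
  fun x => SeqSub (Hf (val x) (valP x)).

Lemma vmapE t t' f Hf x : val (@vmap t t' f Hf x) = f (val x).
Proof. by []. Qed.

Lemma vmap_inj t t' f Hf : injective f -> injective (@vmap t t' f Hf).
Proof. by move=> fi x y /(congr1 val); rewrite !vmapE => /fi; apply: val_inj. Qed.

Definition vroot t : V t := SeqSub (verts_root t).

Lemma vroot_eq t (a : V t) : (a == vroot t) = (val a == [::]).
Proof. by apply/eqP/eqP => [->|E] //; apply: val_inj. Qed.

Lemma vltE t (a b : V t) : vlt a b = addr_lt (val a) (val b).
Proof. by []. Qed.

Lemma V_bullet (a : V pbullet) : val a = [::].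
Proof. by case: a => [[|k z]]. Qed.

Definition delete (i : nat) (l : seq ptree) := take i l ++ drop i.+1 l.

Lemma size_delete i l : i < size l -> size (delete i l) = (size l).-1.
Proof. by move=> lt_il; rewrite /delete size_cat size_take size_drop lt_il; lia. Qed.

Lemma nth_delete i l k : i < size l ->
  nth pbullet (delete i l) k = nth pbullet l (bump i k).
Proof.
move=> lt_il; rewrite /delete nth_cat size_take lt_il /bump.
case: ltnP => [lt_ki|le_ik]; first by rewrite nth_take // add0n.
by rewrite nth_drop add1n addSn subnKC.
Qed.

Lemma map_delete (f : ptree -> ptree) i l : map f (delete i l) = delete i (map f l).
Proof. by rewrite /delete map_cat map_take map_drop. Qed.

Lemma perm_delete (l : seq ptree) i : i < size l -> perm_eq l (nth pbullet l i :: delete i l).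
Proof.
move=> lt_il; rewrite /delete -{1}(cat_take_drop i l) (drop_nth pbullet lt_il).
by rewrite -cat1s perm_catCA.
Qed.

Definition in_branch (i : nat) (w : seq nat) := if w is k :: _ then k == i else false.

Lemma in_branch_lift i w : in_branch i (lift_addr i w) = false.
Proof. by case: w => [|k z] //=; rewrite eq_sym (negbTE (neq_bump i k)). Qed.

Lemma mem_verts_lift l i w : i < size l ->
  (lift_addr i w \in verts (Node l)) = (w \in verts (Node (delete i l))).
Proof.
move=> lt_il; rewrite !mem_verts_Node; case: w => [|k z] //=.
rewrite size_delete // nth_delete //; congr andb; rewrite /bump.
by case: leqP => /= ?; apply/idP/idP; lia.
Qed.

Lemma verts_lift_onto l i w : i < size l -> w \in verts (Node l) -> ~~ in_branch i w ->
  exists2 w', w = lift_addr i w' & w' \in verts (Node (delete i l)).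
Proof.
move=> lt_il wl; case: w wl => [|k z] wl ne_ki; first by exists [::].
exists (unbump i k :: z); first by rewrite /= unbumpK.
by rewrite -(mem_verts_lift _ lt_il) /= unbumpK.
Qed.

Lemma graft_nil x l : graft x [::] (Node l) = Node (x :: l).
Proof. by []. Qed.

Lemma graft_cons x i v l : i < size l ->
  graft x (i :: v) (Node l) = Node (set_nth pbullet l i (graft x v (nth pbullet l i))).
Proof.
move=> lt_il; have -> : graft x (i :: v) (Node l) =
    Node [seq if j == i then graft x v (nth pbullet l j) else nth pbullet l j
         | j <- iota 0 (size l)].
  by rewrite /=; congr Node; elim: (iota 0 (size l)) => //= j s ->.
congr Node; apply: (@eq_from_nth _ pbullet).
  by rewrite size_map size_iota size_set_nth; lia.
move=> k; rewrite size_map size_iota => lt_kl.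
by rewrite (nth_map 0) ?size_iota // nth_iota // nth_set_nth /=; case: eqP => // ->.
Qed.

Section GraftVerts.
Variables (x y : ptree) (v : seq nat).
Hypothesis yv : v \in verts y.

Lemma mem_graft_cat w : (v ++ 0 :: w \in verts (graft x v y)) = (w \in verts x).
Proof.
elim: v y yv => [|i v' IH] [l]; first by move=> _; rewrite graft_nil mem_verts_Node.
rewrite mem_verts_Node => /andP [lt_il lv'].
rewrite graft_cons // mem_verts_Node size_set_nth /= nth_set_nth /= eqxx IH //.
by rewrite leq_max ltnSn.
Qed.

Lemma mem_graft_shift w : (shift_at v w \in verts (graft x v y)) = (w \in verts y).
Proof.
elim: v y yv w => [|i v' IH] [l] yv' w.
  by case: w => [|k z]; rewrite !mem_verts_Node.
move: yv'; rewrite mem_verts_Node => /andP [lt_il lv'].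
case: w => [|k z]; first by rewrite !mem_verts_Node.
rewrite graft_cons // !mem_verts_Node size_set_nth /= nth_set_nth /=.
have -> : maxn i.+1 (size l) = size l by lia.
by case: (ltnP k (size l)) => //= _; case: (k =P i) => [->|]; [apply: IH|].
Qed.

Lemma graft_vertsP w : w \in verts (graft x v y) ->
  (exists2 z, w = v ++ 0 :: z & z \in verts x) \/
  (exists2 z, w = shift_at v z & z \in verts y).
Proof.
elim: v y yv w => [|i v' IH] [l] yv' w.
  rewrite graft_nil mem_verts_Node; case: w => [|[|k] z].
  - by right; exists [::]; rewrite ?verts_root.
  - by case/andP => _ xz; left; exists z.
  - by case/andP => lt_kl lz; right; exists (k :: z); rewrite // mem_verts_Node; apply/andP.
move: (yv'); rewrite mem_verts_Node => /andP [lt_il lv'].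
rewrite graft_cons // mem_verts_Node size_set_nth.
case: w => [|k z]; first by right; exists [::]; rewrite ?verts_root.
rewrite nth_set_nth /=; case/andP => lt_kl.
case: (k =P i) => [->|ne_ki] lz.
  case: (IH _ lv' _ lz) => [[z' -> xz']|[z' -> yz']]; first by left; exists z'.
  by right; exists (i :: z'); rewrite /= ?eqxx // mem_verts_Node lt_il.
right; exists (k :: z); first by rewrite /=; case: eqP.
by rewrite mem_verts_Node lz andbT; lia.
Qed.

End GraftVerts.

Definition lllV (t : ptree) : rel (V t) := fun a b => lll t (val a) (val b).

Lemma lll_root_r l w : lll (Node l) w [::] = false.
Proof. by elim: l w => [|s l IH] // [|[|k] z] //=; apply: IH. Qed.

(** * Splitting the vertices of a tree *)

Section LeftBranch.
Variables (t1 : ptree) (r : seq ptree).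
Local Notation tau := (Node (t1 :: r)).

Lemma top1_subproof w : w \in verts t1 -> 0 :: w \in verts tau.
Proof. by rewrite mem_verts_Node. Qed.

Lemma top2_subproof w : w \in verts (Node r) -> lift_addr 0 w \in verts tau.
Proof. by rewrite (@mem_verts_lift (t1 :: r)) // /delete /= drop0. Qed.

Definition top1 : V t1 -> V tau := vmap top1_subproof.
Definition top2 : V (Node r) -> V tau := vmap top2_subproof.

Lemma top1_inj : injective top1.
Proof. by apply: vmap_inj => a b []. Qed.

Lemma top1_onto b : in_branch 0 (val b) -> exists x, top1 x = b.
Proof.
case: b => -[|[|k] z] // wt _; have zt1 : z \in verts t1 by rewrite mem_verts_Node in wt.
by exists (SeqSub zt1); apply: val_inj.
Qed.

Lemma top2_onto b : ~~ in_branch 0 (val b) -> exists y, top2 y = b.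
Proof.
case: b => w wt nw; have [w' ew w'r] := @verts_lift_onto (t1 :: r) 0 w isT wt nw.
rewrite /delete /= drop0 in w'r.
by exists (SeqSub w'r); apply: val_inj; rewrite vmapE /= ew.
Qed.

Definition top_split : bisplit (V tau) :=
  @Bisplit _ (fun b => in_branch 0 (val b)) (V t1) (V (Node r)) top1 top2
    top1_inj (vmap_inj (@lift_addr_inj 0))
    (fun x => eqxx 0) (fun y => negbT (in_branch_lift 0 _)) top1_onto top2_onto.

Lemma vlt_top11 a b : vlt (top1 a) (top1 b) = vlt a b.
Proof. exact: addr_lt_cons2. Qed.
Lemma vlt_top22 a b : vlt (top2 a) (top2 b) = vlt a b.
Proof. exact: addr_lt_lift2. Qed.
Lemma vlt_top12 a b : vlt (top1 a) (top2 b) = false.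
Proof. exact: addr_lt_cons_lift. Qed.
Lemma vlt_top21 a b : vlt (top2 a) (top1 b) = (val a == [::]).
Proof. exact: addr_lt_lift_cons. Qed.

Lemma lll_top11 a b : lllV (top1 a) (top1 b) = lllV a b.
Proof. by []. Qed.
Lemma lll_top22 a b : lllV (top2 a) (top2 b) = lllV a b.
Proof. by rewrite /lllV !vmapE; case: (val a) => [|? ?]; case: (val b) => [|? ?]. Qed.
Lemma lll_top12 a b : lllV (top1 a) (top2 b) = false.
Proof. by rewrite /lllV !vmapE; case: (val b) => [|? ?]. Qed.
Lemma lll_top21 a b : lllV (top2 a) (top1 b).
Proof. by rewrite /lllV !vmapE; case: (val a) => [|? ?]. Qed.

Definition top_root : V tau := top1 (vroot t1).

Lemma in_branch_lll_root b : lllV top_root b -> in_branch 0 (val b).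
Proof.
by have [//|/top2_onto [y <-]] := boolP (in_branch 0 (val b)); rewrite lll_top12.
Qed.

Lemma vlt_top_root b : in_branch 0 (val b) -> b != top_root -> vlt top_root b.
Proof.
by case/top1_onto => x <-; rewrite vlt_top11 vltE addr_lt0s (inj_eq top1_inj) vroot_eq.
Qed.

End LeftBranch.

Section Branch.
Variables (l : seq ptree) (i : nat).
Hypothesis lt_il : i < size l.

Lemma br1_subproof w : w \in verts (nth pbullet l i) -> i :: w \in verts (Node l).
Proof. by rewrite mem_verts_Node lt_il. Qed.
Lemma br2_subproof w : w \in verts (Node (delete i l)) -> lift_addr i w \in verts (Node l).
Proof. by rewrite mem_verts_lift. Qed.

Definition br1 : V (nth pbullet l i) -> V (Node l) := vmap br1_subproof.
Definition br2 : V (Node (delete i l)) -> V (Node l) := vmap br2_subproof.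

Lemma br1_inj : injective br1.
Proof. by apply: vmap_inj => a b []. Qed.

Lemma br1_onto b : in_branch i (val b) -> exists x, br1 x = b.
Proof.
case: b => -[|k z] // wl /= /eqP ek; subst k.
have zi : z \in verts (nth pbullet l i) by rewrite mem_verts_Node in wl; case/andP: wl.
by exists (SeqSub zi); apply: val_inj.
Qed.

Lemma br2_onto b : ~~ in_branch i (val b) -> exists y, br2 y = b.
Proof.
case: b => w wl nw; have [w' ew w'l] := verts_lift_onto lt_il wl nw.
by exists (SeqSub w'l); apply: val_inj; rewrite vmapE /= ew.
Qed.

Definition branch_split : bisplit (V (Node l)) :=
  @Bisplit _ (fun b => in_branch i (val b)) _ _ br1 br2
    br1_inj (vmap_inj (@lift_addr_inj i))
    (fun x => eqxx i) (fun y => negbT (in_branch_lift i _)) br1_onto br2_onto.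

Lemma vlt_br11 a b : vlt (br1 a) (br1 b) = vlt a b.
Proof. exact: addr_lt_cons2. Qed.
Lemma vlt_br22 a b : vlt (br2 a) (br2 b) = vlt a b.
Proof. exact: addr_lt_lift2. Qed.
Lemma vlt_br12 a b : vlt (br1 a) (br2 b) = false.
Proof. exact: addr_lt_cons_lift. Qed.
Lemma vlt_br21 a b : vlt (br2 a) (br1 b) = (val a == [::]).
Proof. exact: addr_lt_lift_cons. Qed.

End Branch.

Section GraftSplit.
Variables (x y : ptree) (v : seq nat).
Hypothesis yv : v \in verts y.
Local Notation G := (graft x v y).

Lemma gr1_subproof w : w \in verts x -> v ++ 0 :: w \in verts G.
Proof. by rewrite mem_graft_cat. Qed.
Lemma gr2_subproof w : w \in verts y -> shift_at v w \in verts G.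
Proof. by rewrite mem_graft_shift. Qed.

Definition gr1 : V x -> V G := vmap gr1_subproof.
Definition gr2 : V y -> V G := vmap gr2_subproof.
Definition in_graft (b : V G) := prefix (rcons v 0) (val b).

Lemma gr1_inj : injective gr1.
Proof. by apply: vmap_inj => a b /eqP; rewrite eqseq_cat // => /andP [_ /eqP []]. Qed.

Lemma gr1_onto b : in_graft b -> exists a, gr1 a = b.
Proof.
case: b => w wG; rewrite /in_graft /= => P.
case: (graft_vertsP yv wG) => -[z ew zt]; last by rewrite ew prefix_rcons0_shift_at in P.
by exists (SeqSub zt); apply: val_inj; rewrite vmapE /= ew.
Qed.

Lemma gr2_onto b : ~~ in_graft b -> exists a, gr2 a = b.
Proof.
case: b => w wG; rewrite /in_graft /= => P.
case: (graft_vertsP yv wG) => -[z ew zt]; first by rewrite ew prefix_rcons0_cat in P.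
by exists (SeqSub zt); apply: val_inj; rewrite vmapE /= ew.
Qed.

Definition graft_split : bisplit (V G) :=
  @Bisplit _ in_graft _ _ gr1 gr2 gr1_inj (vmap_inj (@shift_at_inj v))
    (fun a => prefix_rcons0_cat v _) (fun a => negbT (prefix_rcons0_shift_at v _))
    gr1_onto gr2_onto.

Lemma vlt_gr11 a b : vlt (gr1 a) (gr1 b) = vlt a b.
Proof. by rewrite !vltE !vmapE addr_lt_cat2l addr_lt_cons2. Qed.
Lemma vlt_gr22 a b : vlt (gr2 a) (gr2 b) = vlt a b.
Proof. exact: addr_lt_shift_at2. Qed.
Lemma vlt_gr12 a b : vlt (gr1 a) (gr2 b) = false.
Proof. exact: addr_lt_cat_shift_at. Qed.
Lemma vlt_gr21 a b : vlt (gr2 a) (gr1 b) = prefix (val a) v.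
Proof. exact: addr_lt_shift_at_cat. Qed.

Definition graft_root : V G := gr1 (vroot x).

Lemma in_graft_vlt_root b : vlt graft_root b -> in_graft b.
Proof. by have [//|/gr2_onto [y' <-]] := boolP (in_graft b); rewrite vlt_gr12. Qed.

Lemma vlt_graft_root b : in_graft b -> b != graft_root -> vlt graft_root b.
Proof.
by case/gr1_onto => x' <-; rewrite vlt_gr11 vltE addr_lt0s (inj_eq gr1_inj) vroot_eq.
Qed.

End GraftSplit.

(** * Rooted orders *)

Record rooted_order (A : finType) (R : rel A) (rho : A) : Prop := RootedOrder {
  ro_irr : irreflexive R;
  ro_trans : transitive R;
  ro_root : forall x, x != rho -> R rho x;
  ro_chain : forall a b c, R a c -> R b c -> [|| a == b, R a b | R b a] }.

Lemma rooted_order_vlt t : rooted_order (@vlt t) (vroot t).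
Proof.
split.
- by move=> a; rewrite vltE addr_ltxx.
- by move=> b a c; rewrite !vltE; apply: addr_lt_trans.
- by move=> a; rewrite vroot_eq vltE addr_lt0s.
- move=> a b c; rewrite !vltE => /andP [_ ac] /andP [_ bc].
  by case/orP: (prefixes_comparable ac bc); rewrite prefix_eqVlt => /orP [/eqP/val_inj ->|->];
    rewrite ?eqxx ?orbT.
Qed.

Section Subtree.
Variables (A : finType) (R : rel A) (rho : A).
Hypothesis HR : rooted_order R rho.

Let Rxx a : R a a = false. Proof. exact: (@ro_irr _ _ _ HR a). Qed.
Let Rtrans a b c : R a b -> R b c -> R a c. Proof. exact: (@ro_trans _ _ _ HR b a c). Qed.

Definition subtree (u : A) : pred A := fun a => (a == u) || R u a.

Lemma subtree_refl u : subtree u u.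
Proof. by rewrite /subtree eqxx. Qed.

Lemma subtree_root a : subtree rho a.
Proof. by rewrite /subtree; case: eqVneq => //= /(ro_root HR). Qed.

Lemma notin_subtree_neq u a : ~~ subtree u a -> u != rho.
Proof. by apply: contraNneq => ->; apply: subtree_root. Qed.

Lemma root_notin_subtree u : u != rho -> ~~ subtree u rho.
Proof.
move=> ne; rewrite /subtree eq_sym (negbTE ne) /=; apply/negP => Rur.
by have := Rtrans Rur (ro_root HR ne); rewrite Rxx.
Qed.

Lemma R_subtree_out u a b : subtree u a -> ~~ subtree u b -> R a b = false.
Proof.
case/orP => [/eqP ->|Rua] nb; apply/negbTE/negP => Rab; case/negP: nb.
  by rewrite /subtree Rab orbT.
by rewrite /subtree (Rtrans Rua Rab) orbT.
Qed.

Lemma R_subtree_in u a b : ~~ subtree u a -> subtree u b -> R a b = R a u.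
Proof.
move=> na; case/orP => [/eqP -> //|Rub]; apply/idP/idP => [Rab|Rau]; last exact: Rtrans Rau Rub.
case/or3P: (ro_chain HR Rab Rub) => [/eqP ea|//|Rua]; case/negP: na.
  by rewrite ea subtree_refl.
by rewrite /subtree Rua orbT.
Qed.

Lemma rooted_order_subtree u :
  rooted_order (relpre val R) (exist (subtree u) u (subtree_refl u)).
Proof.
split.
- by move=> a; apply: Rxx.
- by move=> b a c; apply: Rtrans.
- move=> [a ua] ne; case/orP: (ua) => // /eqP ea.
  by case/eqP: ne; apply: val_inj.
- move=> [a ?] [b ?] [c ?] /= Rac Rbc.
  by case/or3P: (ro_chain HR Rac Rbc) => [/eqP ea|->|->]; rewrite ?orbT // -val_eqE /= ea eqxx.
Qed.

Lemma rooted_order_subtreeC u (ne : u != rho) :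
  rooted_order (relpre val R) (exist (fun a => ~~ subtree u a) rho (root_notin_subtree ne)).
Proof.
split.
- by move=> a; apply: Rxx.
- by move=> b a c; apply: Rtrans.
- move=> [a ?] ne'; apply: (ro_root HR); apply: contraNneq ne' => ea.
  by apply/eqP/val_inj.
- move=> [a ?] [b ?] [c ?] /= Rac Rbc.
  by case/or3P: (ro_chain HR Rac Rbc) => [/eqP ea|->|->]; rewrite ?orbT // -val_eqE /= ea eqxx.
Qed.

Lemma subtreeC_root_card0 : #|{: {a : A | ~~ subtree rho a}}| = 0.
Proof. by apply: eq_card0 => -[a na]; exfalso; rewrite subtree_root in na. Qed.

Lemma fiber_subtree (B : finType) (RB LB : rel B) (D : pred B) (c0 : B)
    (f : {ffun A -> B}) u :
  D c0 -> (forall w, LB c0 w -> D w) -> (forall w, D w -> w != c0 -> RB c0 w) ->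
  bijectiveb f -> bimonotone R RB LB f ->
  (f u == c0) = [forall a, D (f a) == subtree u a].
Proof.
move=> Dc0 LB_D D_RB /bijectivebP [fi fs] /bimonotoneP [C1 C2].
apply/eqP/forallP => [fu a|H].
  have [ua|nua] := boolP (subtree u a).
    by case/orP: ua => [/eqP ->|/C1]; rewrite fu ?Dc0 // => /LB_D ->.
  rewrite eqbF_neg; apply/negP => Dfa; case: (eqVneq (f a) c0) => [fa|ne].
    by case/negP: nua; rewrite -(fi a u) ?fa ?fu // subtree_refl.
  by case/negP: nua; rewrite /subtree C2 ?orbT // fu D_RB.
have [a fa] := fs c0; have /orP [/eqP <- //|Rua] : subtree u a by rewrite -(eqP (H a)) fa.
case: (eqVneq (f u) c0) => // ne.
have Rau : R a u by apply: C2; rewrite fa D_RB // (eqP (H u)) subtree_refl.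
by have := Rtrans Rua Rau; rewrite Rxx.
Qed.

Lemma exists_parent u : u != rho ->
  exists2 p, R p u & forall a, R a u -> (a == p) || R a p.
Proof.
move=> ne; have [p Rpu pmax] := @arg_maxnP A rho (fun z => R z u)
  (fun z => #|[pred w | R w z]|) (ro_root HR ne).
exists p => // a Rau; case/or3P: (ro_chain HR Rau Rpu) => [->|->|Rpa]; rewrite ?orbT //.
have : #|[pred w | R w p]| < #|[pred w | R w a]|.
  apply: proper_card; apply/properP; split.
    by apply/subsetP => w; rewrite !inE => /Rtrans; apply.
  by exists p; rewrite !inE ?Rpa ?Rxx.
by move/leq_trans/(_ (pmax _ Rau)); rewrite ltnn.
Qed.

End Subtree.

Section Fibers.
Variables (A : finType) (R : rel A) (rho : A) (u : A).
Hypothesis HR : rooted_order R rho.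
Local Notation Ain := {a : A | subtree R u a}.
Local Notation Aout := {a : A | ~~ subtree R u a}.
Local Notation S := (bisplit_sub (subtree R u)).

Lemma R_in_out (x : Ain) (y : Aout) : R (val x) (val y) = false.
Proof. exact: (R_subtree_out HR (valP x) (valP y)). Qed.

Section LeftBranchFiber.
Variables (t1 : ptree) (r : seq ptree).
Local Notation tau := (Node (t1 :: r)).

Lemma top_across (g1 : {ffun Ain -> V t1}) (g2 : {ffun Aout -> V (Node r)}) :
  bimonotone (relpre val R) (@vlt (Node r)) (@lllV (Node r)) g2 ->
  bimonotone_across (SA := S) (SB := top_split t1 r) R (@vlt tau) (@lllV tau) g1 g2.
Proof.
move=> /bimonotoneP [C1 _]; apply/forallP => y; apply/forallP => x.
rewrite /= lll_top21 vlt_top21 implybT; apply/implyP => /eqP g2y_root.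
have ne_u := notin_subtree_neq HR (valP y).
have y_root : sval y = rho.
  apply/eqP; apply: contraT => ne_y.
  have := C1 (exist _ rho (root_notin_subtree HR ne_u)) y (ro_root HR ne_y).
  by rewrite /lllV g2y_root lll_root_r.
rewrite y_root (ro_root HR) //; apply: contraTneq (valP x) => /= ->.
exact: root_notin_subtree.
Qed.

Lemma card_top_fiber :
  #|[pred f : {ffun A -> V tau} |
     [&& bijectiveb f, bimonotone R (@vlt tau) (@lllV tau) f & f u == top_root t1 r]]| =
  nbimonotone (relpre val R : rel Ain) (@vlt t1) (@lllV t1) *
  nbimonotone (relpre val R : rel Aout) (@vlt (Node r)) (@lllV (Node r)).
Proof.
rewrite -(card_bij_glue (SA := S) (SB := top_split t1 r) (b0 := top_root t1 r)
  (P := bimonotone R (@vlt tau) (@lllV tau))).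
  apply: eq_card => f; rewrite !inE; have [Bf|] := boolP (bijectiveb f) => //=.
  have [Cf|] := boolP (bimonotone R _ _ f); rewrite ?andbF //= andbT.
  exact: (fiber_subtree HR u isT (@in_branch_lll_root t1 r) (@vlt_top_root t1 r) Bf Cf).
move=> g1 g2 _ _; rewrite -[X in _ && X]andbT.
apply: (bimonotone_glue_eq (SA := S) (SB := top_split t1 r));
  [exact: R_in_out | exact: vlt_top12 | by [] | exact: vlt_top11 | exact: lll_top11
  | by [] | exact: vlt_top22 | exact: lll_top22 | by move=> /(top_across g1) ->].
Qed.

End LeftBranchFiber.

Definition attached (v : seq nat) (y : ptree) (g : {ffun Aout -> V y}) :=
  [forall a, R (val a) u == prefix (val (g a)) v].

Definition nattached (v : seq nat) (y : ptree) :=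
  #|[pred g : {ffun Aout -> V y} |
     [&& bijectiveb g, bimonotone (relpre val R) (@vlt y) (@vlt y) g & attached v g]]|.

Section GraftFiber.
Variables (x y : ptree) (v : seq nat).
Hypothesis yv : v \in verts y.
Local Notation G := (graft x v y).

Lemma graft_across (g1 : {ffun Ain -> V x}) (g2 : {ffun Aout -> V y}) :
  bimonotone_across (SA := S) (SB := graft_split x yv) R (@vlt G) (@vlt G) g1 g2 =
  attached v g2.
Proof.
apply: eq_forallb => a; apply/forallP/eqP => [H|E b].
  have /andP [/implyP h1 /implyP h2] := H (exist _ u (subtree_refl R u)).
  by rewrite /= vlt_gr21 in h1 h2; apply/idP/idP; [apply: h1|apply: h2].
by rewrite /= vlt_gr21 (R_subtree_in HR (valP a) (valP b)) E; case: prefix.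
Qed.

Lemma card_graft_fiber :
  #|[pred f : {ffun A -> V G} |
     [&& bijectiveb f, bimonotone R (@vlt G) (@vlt G) f & f u == graft_root x yv]]| =
  nbimonotone (relpre val R : rel Ain) (@vlt x) (@vlt x) * nattached v y.
Proof.
rewrite -(card_bij_glue (SA := S) (SB := graft_split x yv) (b0 := graft_root x yv)
  (P := bimonotone R (@vlt G) (@vlt G))).
  apply: eq_card => f; rewrite !inE; have [Bf|] := boolP (bijectiveb f) => //=.
  have [Cf|] := boolP (bimonotone R _ _ f); rewrite ?andbF //= andbT.
  apply: (fiber_subtree HR u (prefix_rcons0_cat v [::])) Bf Cf => [w|w].
    exact: in_graft_vlt_root.
  exact: vlt_graft_root.
move=> g1 g2 _ _; apply: (bimonotone_glue_eq (SA := S) (SB := graft_split x yv));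
  [exact: R_in_out | exact: vlt_gr12 | by [] | exact: vlt_gr11 | exact: vlt_gr11
  | by [] | exact: vlt_gr22 | exact: vlt_gr22 | by rewrite graft_across].
Qed.

End GraftFiber.

(* The attachment vertex is the image of the parent of [u]. *)
Lemma attachedE y (g : {ffun Aout -> V y}) :
  bijectiveb g -> bimonotone (relpre val R) (@vlt y) (@vlt y) g ->
  exists2 w0, w0 \in verts y & {in verts y, forall v, attached v g = (v == w0)}.
Proof.
move=> /bijectivebP [gi gs] /bimonotoneP [C1 C2].
have [a0 _] := gs (vroot y).
have ne_u := notin_subtree_neq HR (valP a0).
have [p Rpu pmax] := exists_parent HR ne_u.
have p_out : ~~ subtree R u p.
  apply/negP; case/orP => [/eqP ep|Rup]; first by rewrite ep (ro_irr HR) in Rpu.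
  by have := ro_trans HR Rup Rpu; rewrite (ro_irr HR).
pose p' : Aout := exist _ p p_out.
have attached_p : attached (val (g p')) g.
  apply/forallP => a; rewrite prefix_eqVlt -vltE val_eqE (inj_eq gi).
  apply/eqP; apply/idP/idP => [Rau|/orP [/eqP -> //|/C2 Rap]].
    case/orP: (pmax _ Rau) => [/eqP ap|Rap]; last by rewrite (C1 a p' Rap) orbT.
    by rewrite (_ : a = p') ?eqxx //; apply: val_inj.
  exact: (ro_trans HR (Rap : R (val a) p) Rpu).
exists (val (g p')); first exact: valP.
move=> w wy; apply/idP/eqP => [att_w|->] //.
have [a ga] := gs (SeqSub wy).
move/forallP: (att_w) => /(_ a); rewrite ga /= prefix_refl => /eqP Rau.
move/forallP: (attached_p) => /(_ a); rewrite ga /= Rau eq_sym => /eqP w_p.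
move/forallP: (att_w) => /(_ p'); rewrite /= Rpu eq_sym => /eqP p_w.
exact: prefix_antisym.
Qed.

Lemma sum_attached y :
  \sum_(v <- verts y) nattached v y = nbimonotone (relpre val R : rel Aout) (@vlt y) (@vlt y).
Proof.
have cardE v : nattached v y = \sum_g
    (if [&& bijectiveb g, bimonotone (relpre val R) (@vlt y) (@vlt y) g & attached v g]
     then 1 else 0).
  by rewrite /nattached -sum1_card big_mkcond.
under eq_bigr do rewrite cardE.
rewrite exchange_big /nbimonotone -sum1_card [RHS]big_mkcond /=; apply: eq_bigr => g _.
rewrite unfold_in; have [Bg|_] := boolP (bijectiveb g); last by rewrite big1.
have [Cg|_] := boolP (bimonotone _ _ _ g); last by rewrite big1.
have [w0 w0y attE] := attachedE Bg Cg.
by rewrite -big_mkcond sum1_count (eq_in_count attE) count_uniq_mem ?uniq_verts ?w0y.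
Qed.

End Fibers.

Lemma Psi_cons t1 r : Psi (Node (t1 :: r)) = graftL (Psi t1) (Psi (Node r)).
Proof. by []. Qed.

Lemma sum_Psi_cons (A : finType) (R : rel A) (rho : A) t1 r :
  rooted_order R rho ->
  \sum_(X <- Psi (Node (t1 :: r))) nbimonotone R (@vlt X) (@vlt X) =
  \sum_u \sum_(a <- Psi t1) \sum_(b <- Psi (Node r)) \sum_(v <- verts b)
    nbimonotone (relpre val R : rel {x | subtree R u x}) (@vlt a) (@vlt a) *
    nattached R u v b.
Proof.
move=> HR; rewrite Psi_cons /graftL big_flatten big_allpairs_dep.
rewrite [RHS]exchange_big; apply: eq_bigr => a _.
rewrite [RHS]exchange_big; apply: eq_bigr => b _.
rewrite big_map [RHS]exchange_big [RHS]big_seq [LHS]big_seq; apply: eq_bigr => v bv.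
rewrite (nbimonotone_fiber _ _ _ (graft_root a bv)); apply: eq_bigr => u _.
by rewrite (card_graft_fiber u HR).
Qed.

Lemma nbimonotone_lll_Psi tau (A : finType) (R : rel A) (rho : A) :
  rooted_order R rho ->
  nbimonotone R (@vlt tau) (@lllV tau) = \sum_(X <- Psi tau) nbimonotone R (@vlt X) (@vlt X).
Proof.
elim/ptree_cons_ind: tau A R rho => [|t1 r IH1 IHr] A R rho HR.
  rewrite big_seq1; apply: eq_card => f; rewrite !inE; congr andb.
  by apply: eq_bimonotone => // a b; rewrite vltE !V_bullet.
rewrite (sum_Psi_cons _ _ HR) (nbimonotone_fiber _ _ _ (top_root t1 r)).
apply: eq_bigr => u _.
have outE : nbimonotone (relpre val R : rel {x | ~~ subtree R u x})
    (@vlt (Node r)) (@lllV (Node r)) =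
    \sum_(b <- Psi (Node r)) \sum_(v <- verts b) nattached R u v b.
  under [RHS]eq_bigr do rewrite (sum_attached u HR).
  have [->|ne_u] := eqVneq u rho; last exact: IHr _ _ _ (rooted_order_subtreeC HR ne_u).
  rewrite big1 => [|b _]; apply: nbimonotone_eq0 (subtreeC_root_card0 HR); exact: vroot.
rewrite (card_top_fiber u HR) outE (IH1 _ _ _ (rooted_order_subtree HR u)) big_distrl.
apply: eq_bigr => a _; rewrite big_distrr; apply: eq_bigr => b _.
by rewrite big_distrr.
Qed.

(** * Isomorphisms and canonical forms *)

Definition niso (s X : ptree) := nbimonotone (@vlt s) (@vlt X) (@vlt X).

Lemma niso_refl_gt0 s : 0 < niso s s.
Proof.
apply/card_gt0P; exists [ffun a => a]; rewrite inE; apply/andP; split.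
  by apply/bijectivebP; split=> [a b|b]; rewrite ?ffunE //; exists b; rewrite ffunE.
by apply/bimonotoneP; split => a b; rewrite !ffunE.
Qed.

Lemma niso_transport s X : 0 < niso s X -> 0 < niso X s -> niso s X = niso s s.
Proof.
move=> /card_gt0P [f]; rewrite inE => /andP [/bijectivebP [fi fs] /bimonotoneP [C1 C2]].
move=> /card_gt0P [g]; rewrite inE => /andP [/bijectivebP [gi gs] /bimonotoneP [D1 D2]].
apply/eqP; rewrite eqn_leq; apply/andP; split.
  exact: (leq_nbimonotone_comp _ gi gs D2 D1).
exact: (leq_nbimonotone_comp _ fi fs C2 C1).
Qed.

Lemma iso_root t t' (g : {ffun V t -> V t'}) :
  bijectiveb g -> bimonotone (@vlt t) (@vlt t') (@vlt t') g ->
  forall a, (val (g a) == [::]) = (val a == [::]).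
Proof.
move=> /bijectivebP [gi gs] /bimonotoneP [C1 _] a; rewrite -!vroot_eq.
apply/idP/idP => /eqP Ea; apply: contraTT isT => ne.
  by have := C1 _ _ (ro_root (rooted_order_vlt t) ne); rewrite Ea vltE addr_lts0.
have [b gb] := gs (vroot t').
have ne_b : b != vroot t by apply: contraNneq ne => eb; rewrite Ea -eb gb.
by have := C1 _ _ (ro_root (rooted_order_vlt t) ne_b); rewrite -Ea gb vltE addr_lts0.
Qed.

Lemma card_iso_branch l i (lt_il : i < size l) x m :
  #|[pred f : {ffun V (Node l) -> V (Node (x :: m))} |
     [&& bijectiveb f, [forall a, in_branch 0 (val (f a)) == in_branch i (val a)]
       & bimonotone (@vlt _) (@vlt _) (@vlt _) f]]| =
  niso (nth pbullet l i) x * niso (Node (delete i l)) (Node m).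
Proof.
apply: (card_bij_glue (SA := branch_split lt_il) (SB := top_split x m) (b0 := top_root x m)).
move=> g1 g2 _ b2; rewrite -[X in _ && X]andbT.
apply: (bimonotone_glue_eq (SA := branch_split lt_il) (SB := top_split x m));
  [exact: vlt_br12 | exact: vlt_top12 | exact: vlt_br11 | exact: vlt_top11 | exact: vlt_top11
  | exact: vlt_br22 | exact: vlt_top22 | exact: vlt_top22 |].
move=> /bimonotoneP [C1 C2]; apply/forallP => y; apply/forallP => z.
by rewrite /= vlt_br21 vlt_top21 (iso_root b2) ?implybb //; apply/bimonotoneP.
Qed.

Lemma in_branchE i w : in_branch i w = (w == [:: i]) || addr_lt [:: i] w.
Proof.
case: w => [|k z] //; rewrite /addr_lt /= eqseq_cons prefix0s andbT (eq_sym i k).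
by case: (k == i) => //=; case: z.
Qed.

Lemma vlt_top_root_eq x m (b : V (Node (x :: m))) : vlt b (top_root x m) -> val b = [::].
Proof. by rewrite vltE /=; case: (val b) => // k z /andP []; rewrite /= ltnS ltn0. Qed.

Section IsoCons.
Variables (l : seq ptree) (x : ptree) (m : seq ptree).
Variable f : {ffun V (Node l) -> V (Node (x :: m))}.
Hypotheses (Bf : bijectiveb f) (Cf : bimonotone (@vlt _) (@vlt _) (@vlt _) f).

Lemma iso_preimage_top_root :
  exists2 k, k < size l & exists2 u, val u = [:: k] & f u = top_root x m.
Proof.
have /bijectivebP [fi fs] := Bf; have /bimonotoneP [C1 _] := Cf.
have [u fu] := fs (top_root x m).
have root_u : val u != [::].
  by rewrite -(iso_root Bf Cf) fu.
case Eu: (val u) root_u => [//|k z] _.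
have lt_kl : k < size l by move: (valP u); rewrite Eu mem_verts_Node => /andP [].
exists k => //; exists u => //; rewrite Eu; case: z Eu => // z0 z' Eu; exfalso.
have kl : [:: k] \in verts (Node l) by rewrite mem_verts_Node lt_kl verts_root.
have root_below_u : vlt (vroot (Node l)) u by rewrite vltE Eu.
have k_below_u : vlt (SeqSub kl) u by rewrite vltE Eu /= addr_lt_cons2.
have := C1 _ _ root_below_u; have := C1 _ _ k_below_u.
rewrite fu => /vlt_top_root_eq E1 /vlt_top_root_eq E2.
have : SeqSub kl = vroot (Node l) by apply: fi; apply: val_inj; rewrite E1 E2.
by move/(congr1 val).
Qed.

Lemma iso_in_branch k u : val u = [:: k] -> f u = top_root x m ->
  [forall a, in_branch 0 (val (f a)) == in_branch k (val a)].
Proof.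
have /bijectivebP [fi _] := Bf; have /bimonotoneP [C1 C2] := Cf.
move=> Eu fu; apply/forallP => a; rewrite !in_branchE.
have -> : (val (f a) == [:: 0]) = (a == u).
  by apply/eqP/eqP => [E|->]; [apply: fi; apply: val_inj; rewrite E fu | rewrite fu].
have -> : addr_lt [:: 0] (val (f a)) = vlt u a.
  by rewrite -[[:: 0]]/(val (top_root x m)) -fu -vltE; apply/idP/idP => [/C2|/C1].
have -> : (val a == [:: k]) = (a == u) by rewrite -Eu val_eqE.
by rewrite vltE Eu.
Qed.

End IsoCons.

Lemma niso_cons_gt0 l x m : 0 < niso (Node l) (Node (x :: m)) <->
  exists2 i, i < size l &
    0 < niso (nth pbullet l i) x /\ 0 < niso (Node (delete i l)) (Node m).
Proof.
split.
  move=> /card_gt0P [f]; rewrite inE => /andP [Bf Cf].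
  have [k lt_kl [u Eu fu]] := iso_preimage_top_root Bf Cf.
  have : 0 < niso (nth pbullet l k) x * niso (Node (delete k l)) (Node m).
    rewrite -(card_iso_branch lt_kl); apply/card_gt0P; exists f.
    by rewrite inE Bf Cf (iso_in_branch Bf Cf Eu fu).
  by rewrite muln_gt0 => /andP [? ?]; exists k.
case=> i lt_il [P1 P2].
have : 0 < niso (nth pbullet l i) x * niso (Node (delete i l)) (Node m) by rewrite muln_gt0 P1 P2.
rewrite -(card_iso_branch lt_il) => /card_gt0P [f]; rewrite inE => /and3P [Bf _ Cf].
by apply/card_gt0P; exists f; rewrite inE Bf Cf.
Qed.

Lemma niso_bullet_gt0 l : 0 < niso (Node l) pbullet <-> l = [::].
Proof.
split => [|->]; last exact: niso_refl_gt0.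
case: l => // t r /card_gt0P [f]; rewrite inE => /andP [/bijectivebP [fi _] _].
have kl : [:: 0] \in verts (Node (t :: r)) by rewrite mem_verts_Node verts_root.
have : SeqSub kl = vroot _ by apply: fi; apply: val_inj; rewrite !V_bullet.
by move/(congr1 val).
Qed.

Lemma ptree_le_total : total ptree_le.
Proof. by move=> a b; apply: leq_total. Qed.

Lemma ptree_le_trans : transitive ptree_le.
Proof. by move=> b a c; apply: leq_trans. Qed.

Lemma ptree_le_anti : antisymmetric ptree_le.
Proof. by move=> a b; rewrite /ptree_le -eqn_leq => /eqP /(pcan_inj pickleK). Qed.

Lemma eq_canon_Node a b : canon (Node a) = canon (Node b) <-> perm_eq (map canon a) (map canon b).
Proof.
have sortP := perm_sortP ptree_le_total ptree_le_trans ptree_le_anti.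
by split => [[/sortP]|/sortP E] //=; rewrite E.
Qed.

Lemma perm_eq_consP (L M : seq ptree) y : perm_eq L (y :: M) <->
  exists2 i, i < size L & nth pbullet L i = y /\ perm_eq (delete i L) M.
Proof.
split => [pLM|[i lt_iL [<- pM]]]; last by rewrite (perm_trans (perm_delete lt_iL)) ?perm_cons.
have yL : y \in L by rewrite (perm_mem pLM) mem_head.
have lt_iL : index y L < size L by rewrite index_mem.
exists (index y L) => //; rewrite nth_index //; split => //.
rewrite -(perm_cons y); apply: perm_trans pLM; rewrite perm_sym.
by have := perm_delete lt_iL; rewrite nth_index.
Qed.

Lemma niso_gt0 X s : 0 < niso s X <-> canon s = canon X.
Proof.
elim/ptree_cons_ind: X s => [|x m IHx IHm] [l].
  rewrite niso_bullet_gt0; split => [->|[/(congr1 size)]] //.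
  by rewrite size_sort size_map => /size0nil.
rewrite niso_cons_gt0 eq_canon_Node /= perm_eq_consP size_map.
split => -[i lt_il [P1 P2]]; exists i => //; rewrite (nth_map pbullet) // in P1 *.
  by split; [apply/IHx | rewrite -map_delete; apply/eq_canon_Node/IHm].
by split; [apply/IHx | apply/IHm/eq_canon_Node; rewrite map_delete].
Qed.

Lemma nisoE s X : niso s X = (canon X == canon s) * niso s s.
Proof.
have [E|ne] := eqVneq (canon X) (canon s).
  by rewrite mul1n niso_transport //; apply/niso_gt0; rewrite E.
by apply/eqP; rewrite mul0n -leqn0 leqNgt; apply: contra_neqN ne => /niso_gt0 ->.
Qed.

Lemma btildeE s tau : btilde s tau = nbimonotone (@vlt s) (@vlt tau) (@lllV tau).
Proof. by apply: eq_card => f; rewrite !inE /bijectiveb /bimonotone !andbA. Qed.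

Lemma symE s : sym s = niso s s.
Proof. by apply: eq_card => f; rewrite !inE /bijectiveb /bimonotone !andbA. Qed.

Lemma btilde_Psi s tau : canon s = s ->
  btilde s tau = count (fun X => canon X == s) (Psi tau) * sym s.
Proof.
move=> Cs; rewrite btildeE (nbimonotone_lll_Psi _ (rooted_order_vlt s)) symE.
under eq_bigr => X _ do rewrite -[nbimonotone _ _ _]/(niso s X) nisoE Cs.
rewrite -big_distrl -sum1_count; congr (_ * _).
by rewrite [RHS]big_mkcond; apply: eq_bigr => X _; case: eqP.
Qed.

Unset Implicit Arguments.
Import GRing.Theory Num.Theory.
Local Open Scope ring_scope.

Theorem corollary2p5 (S : ntree -> ptree)
    (HS : forall t : ntree, canon (S t) = val t)
    (t s : ntree) :
  ((coef s (PsiTilde S t))%:R : rat)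
    = (btilde (val s) (S t))%:R / (sym (val s))%:R.
Proof.
have coefE : coef s (PsiTilde S t) = count (fun X => canon X == val s) (Psi (S t)).
  by rewrite /coef /PsiTilde /pi_lc count_map.
have sym_gt0 : (0 < sym (val s))%N by rewrite symE niso_refl_gt0.
rewrite (btilde_Psi _ (eqP (valP s))) -coefE natrM mulfK //.
by rewrite pnatr_eq0 -lt0n.
Qed.
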